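(* Let $q$ be a prime power, let $C$ be an $[n,k,d]_q$ Griesmer optimal linear code, and let $k_1=\min\{\Gamma_q(n,k,d),k-1\}$. Then $C$ has a chain of linear subcodes $C_1\subset C_2\subset\cdots\subset C_{k_1}\subset C$ such that, for each $1\le i\le k_1$, $C_i$ has dimension $i$ and effective length $n(C_i)=g_q(i,d)$.
   Context: An $[n,k,d]_q$ linear code is a $k$-dimensional subspace of $\mathbb{F}_q^n$ with minimum nonzero Hamming weight $d$. The support of a code $D$ is the set of coordinates on which some codeword of $D$ is nonzero, and its effective length $n(D)$ is the size of this set. Let $g_q(k,d)=\sum_{i=0}^{k-1}\lceil d/q^i\rceil$. $C$ is Griesmer optimal if $n<g_q(k,d+1)$. For a Griesmer optimal $[n,k,d]_q$ code, $\Gamma_q(n,k,d)=k$ if $n=g_q(k,d)$; otherwise $\Gamma_q(n,k,d)$ is the smallest non-negative integer $k_1$ such that $n-g_q(k_1,d)\ge g_q(k-k_1,\lceil d/q^{k_1}\rceil+1)$ (with $g_q(0,\cdot)=0$). *)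

From HB Require Import structures.
From mathcomp Require Import all_boot all_order all_algebra.
Set Implicit Arguments. Unset Strict Implicit. Unset Printing Implicit Defensive.
Import GRing.Theory.

Local Open Scope ring_scope.

Definition ceil_div (a b : nat) : nat := ((a + b.-1) %/ b)%N.

Definition griesmer (q k d : nat) : nat := (\sum_(i < k) ceil_div d (q ^ i))%N.

Section Codes.
Variables (F : finFieldType) (n : nat).

Definition wt (v : 'rV[F]_n) : nat := #|[set i : 'I_n | v 0 i != 0]|.

Definition code_support (D : {vspace 'rV[F]_n}) : {set 'I_n} :=
  [set i : 'I_n | [exists v : 'rV[F]_n, (v \in D) && (v 0 i != 0)]].

Definition eff_length (D : {vspace 'rV[F]_n}) : nat := #|code_support D|.

Definition min_weight (D : {vspace 'rV[F]_n}) (d : nat) : Prop :=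
  (exists2 v, v \in D & (v != 0) /\ wt v = d) /\
  (forall v, v \in D -> v != 0 -> (d <= wt v)%N).

Definition is_code (C : {vspace 'rV[F]_n}) (k d : nat) : Prop :=
  \dim C = k /\ min_weight C d.

End Codes.

Definition griesmer_optimal (q n k d : nat) : Prop := (n < griesmer q k d.+1)%N.

(* For a code meeting the
   Griesmer bound k1 = k always satisfies the condition, so searching in
   [0, k] finds the least such k1. *)
Definition Gamma (q n k d : nat) : nat :=
  if n == griesmer q k d then k
  else find (fun k1 => griesmer q (k - k1) (ceil_div d (q ^ k1)).+1
                         <= n - griesmer q k1 d)%N (iota 0 k.+1).

From mathcomp Require Import all_boot all_order all_algebra.
From mathcomp Require Import zify.
Set Implicit Arguments. Unset Strict Implicit. Unset Printing Implicit Defensive.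
Import GRing.Theory.

(* The chain is built greedily.  Given a subcode D <= C of dimension j < k1
   with n(D) = g_q(j,d), pick a in C \ D of weight at most ceil(d/q^j) outside
   supp D: then D + <a> has effective length at most g_q(j+1,d), hence exactly
   g_q(j+1,d) by the Griesmer bound.  If there were no such a, every nonzero
   word of a complement of D in C would have weight at least ceil(d/q^j)+1 on
   the n - g_q(j,d) coordinates outside supp D, and the Griesmer bound on
   those coordinates contradicts the minimality in the definition of Gamma.
   The Griesmer bound is used for weights restricted to a coordinate set S;
   it follows from the residual code argument: if c has minimal S-weight w,
   a pigeonhole choice of l makes a + l c vanish on at least ceil(w/q)
   coordinates of S /\ supp c, so a has weight at least ceil(w/q) on S \ supp c. *)

Lemma leq_ceil_divLR a b y : 0 < b -> (ceil_div a b <= y) = (a <= y * b).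
Proof. by move=> b_gt0; rewrite /ceil_div -ltnS ltn_divLR //; apply/idP/idP; lia. Qed.

Lemma ceil_divn1 a : ceil_div a 1 = a.
Proof. by rewrite /ceil_div addn0 divn1. Qed.

Lemma ceil_divMA a b c : 0 < b -> 0 < c ->
  ceil_div a (b * c) = ceil_div (ceil_div a b) c.
Proof.
move=> b_gt0 c_gt0; have bc_gt0 : 0 < b * c by rewrite muln_gt0 b_gt0.
have same_ub y : (ceil_div a (b * c) <= y) = (ceil_div (ceil_div a b) c <= y).
  by rewrite !leq_ceil_divLR // mulnA mulnAC.
by apply/eqP; rewrite eqn_leq same_ub leqnn -same_ub leqnn.
Qed.

Lemma leq_ceil_div2r c a b : a <= b -> ceil_div a c <= ceil_div b c.
Proof. by move=> le_ab; rewrite leq_div2r // leq_add2r. Qed.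

Lemma pigeonhole_fiber (A B : finType) (f : A -> B) (T : {set A}) :
  0 < #|B| -> exists y, ceil_div #|T| #|B| <= #|[set x in T | f x == y]|.
Proof.
move=> B_gt0; pose fiber := fun y => #|[set x in T | f x == y]|.
have [y max_y] := eq_bigmax fiber B_gt0; exists y.
have -> : #|T| = \sum_(y : B) fiber y.
  rewrite -sum1_card (partition_big f xpredT) //=.
  by apply: eq_bigr => z _; rewrite /fiber -sum1_card; apply: eq_bigl => x; rewrite inE.
rewrite leq_ceil_divLR // -/(fiber y) -max_y mulnC -sum_nat_const.
by apply: leq_sum => z _; apply: leq_bigmax.
Qed.

Section Griesmer.
Variable q : nat.
Hypothesis q_gt0 : 0 < q.

Lemma griesmer0 d : griesmer q 0 d = 0.
Proof. exact: big_ord0. Qed.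

Lemma leq_griesmer k a b : a <= b -> griesmer q k a <= griesmer q k b.
Proof. by move=> le_ab; apply: leq_sum => i _; apply: leq_ceil_div2r. Qed.

Lemma griesmerS k d : griesmer q k.+1 d = d + griesmer q k (ceil_div d q).
Proof.
rewrite /griesmer big_ord_recl /= expn0 ceil_divn1; congr (_ + _).
by apply: eq_bigr => i _; rewrite expnS ceil_divMA ?expn_gt0 ?q_gt0.
Qed.

Lemma griesmerSr k d : griesmer q k.+1 d = griesmer q k d + ceil_div d (q ^ k).
Proof. exact: big_ord_recr. Qed.

Lemma griesmerD j m d :
  griesmer q (j + m) d = griesmer q j d + griesmer q m (ceil_div d (q ^ j)).
Proof.
elim: j d => [|j IHj] d; first by rewrite griesmer0 expn0 ceil_divn1.
by rewrite addSn !griesmerS IHj addnA expnS ceil_divMA ?expn_gt0 ?q_gt0.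
Qed.

Lemma ltn_griesmerS k d : 0 < k -> griesmer q k d < griesmer q k d.+1.
Proof.
case: k => // k _; rewrite !griesmerS addSn ltnS leq_add2l.
exact/leq_griesmer/leq_ceil_div2r.
Qed.

End Griesmer.

Lemma before_Gamma q n k d j : 0 < q -> j < minn (Gamma q n k d) k.-1 ->
  n - griesmer q j d < griesmer q (k - j) (ceil_div d (q ^ j)).+1.
Proof.
move=> q_gt0; rewrite /Gamma; case: eqP => [-> | _] lt_j_k1.
  have le_jk : j <= k by lia.
  by rewrite -{1}(subnKC le_jk) griesmerD // addKn ltn_griesmerS // subn_gt0; lia.
have lt_j_find : j < find (fun k1 => griesmer q (k - k1) (ceil_div d (q ^ k1)).+1
                                       <= n - griesmer q k1 d) (iota 0 k.+1) by lia.
have := before_find 0 lt_j_find; rewrite nth_iota ?add0n; last lia.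
by rewrite ltnNge => ->.
Qed.

Lemma card_finField_gt0 (F : finFieldType) : 0 < #|F|.
Proof. exact/ltnW/card_finNzRing_gt1. Qed.

Local Open Scope ring_scope.

Section VspaceFacts.
Variables (K : fieldType) (vT : vectType K).
Implicit Types (U V : {vspace vT}) (a : vT).

Lemma memv_diff_notin U V a : a \in (U :\: V)%VS -> a != 0 -> a \notin V.
Proof.
move=> aUV; apply: contra => aV.
by rewrite -memv0 -(capv_diff U V) memv_cap aUV.
Qed.

Lemma dimv_diff_sub U V : (V <= U)%VS -> \dim (U :\: V) = (\dim U - \dim V)%N.
Proof. by move=> /capv_idPr capUV; rewrite -(dimv_cap_compl U V) capUV addKn. Qed.

Lemma dimv_add_line V a : a \notin V -> \dim (V + <[a]>) = (\dim V).+1.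
Proof.
move=> aV; have a_neq0 : a != 0 by apply: contra aV => /eqP ->; rewrite mem0v.
rewrite dimv_disjoint_sum ?dim_vline ?a_neq0 ?addn1 //.
apply/eqP; rewrite -subv0; apply/subvP => x; rewrite memv_cap memv0.
case/andP=> xV /vlineP[m def_x]; apply: contraLR xV => x_neq0.
have m_neq0 : m != 0 by apply: contra x_neq0 => /eqP m0; rewrite def_x m0 scale0r.
by apply: contra aV; rewrite -[a](scalerK m_neq0) -def_x => /memvZ->.
Qed.

End VspaceFacts.

Section Weights.
Variables (F : finFieldType) (n : nat).
Implicit Types (S T : {set 'I_n}) (a c v : 'rV[F]_n) (V : {vspace 'rV[F]_n}).

Definition word_support v : {set 'I_n} := [set i | v 0 i != 0].

Definition wt_on S v : nat := #|S :&: word_support v|.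

Lemma wt_on_split T S v : wt_on S v = (wt_on (S :&: T) v + wt_on (S :\: T) v)%N.
Proof. by rewrite /wt_on -(cardsID T (S :&: _)) setIAC setIDAC. Qed.

Lemma wt_on_addZ_off_support S a c l :
  wt_on (S :\: word_support c) (a + l *: c) = wt_on (S :\: word_support c) a.
Proof.
apply: eq_card => i; rewrite !inE !mxE.
by case: (c 0 i =P 0) => [-> | //]; rewrite mulr0 addr0.
Qed.

Lemma wt_on_cancel S a c : exists l : F,
  (wt_on (S :&: word_support c) (a + l *: c) + ceil_div (wt_on S c) #|F| <= wt_on S c)%N.
Proof.
set T := S :&: word_support c.
(* For i in supp c, the only l with a_i + l c_i = 0 is l = - a_i / c_i. *)
have [l fiber_l] := pigeonhole_fiber (fun i => - a 0 i / c 0 i) T (card_finField_gt0 F).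
exists l; set v := a + l *: c.
have fiber_sub : [set i in T | - a 0 i / c 0 i == l] \subset T :\: word_support v.
  apply/subsetP => i; rewrite !inE !mxE => /andP[/andP[Si ci] /eqP <-].
  by rewrite Si ci divfK // addrN eqxx.
rewrite /wt_on -/T -[X in (_ <= X)%N](cardsID (word_support v) T) leq_add2l.
exact: leq_trans fiber_l (subset_leq_card fiber_sub).
Qed.

Lemma wt_on_residual V S c a :
  c \in V -> a \in V -> a \notin <[c]>%VS ->
  (forall v, v \in V -> v != 0 -> (wt_on S c <= wt_on S v)%N) ->
  (ceil_div (wt_on S c) #|F| <= wt_on (S :\: word_support c) a)%N.
Proof.
move=> cV aV a_notin_c c_min; have [l cancel_l] := wt_on_cancel S a c.
have vV : a + l *: c \in V by rewrite memvD ?memvZ.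
have v_neq0 : a + l *: c != 0.
  apply: contra a_notin_c => v0; apply/vlineP; exists (- l).
  by apply/eqP; rewrite scaleNr -addr_eq0.
have := c_min _ vV v_neq0.
rewrite [wt_on S (_ + _)](wt_on_split (word_support c)) wt_on_addZ_off_support; lia.
Qed.

Lemma griesmer_bound_on k S V delta :
  \dim V = k -> (forall v, v \in V -> v != 0 -> (delta <= wt_on S v)%N) ->
  (griesmer #|F| k delta <= #|S|)%N.
Proof.
elim: k S V delta => [|k IHk] S V delta dimV wtV; first by rewrite griesmer0.
have nz_pick : (vpick V \in V) && (vpick V != 0).
  by rewrite memv_pick vpick0 -dimv_eq0 dimV.
have [c /andP[cV c_neq0] c_min] :=
  @arg_minnP _ _ (fun v => (v \in V) && (v != 0)) (wt_on S) nz_pick.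
set W := (V :\: <[c]>)%VS.
have dimW : \dim W = k.
  by rewrite dimv_diff_sub -?memvE // dim_vline c_neq0 dimV subn1.
have wtW : forall a, a \in W -> a != 0 ->
    (ceil_div (wt_on S c) #|F| <= wt_on (S :\: word_support c) a)%N.
  move=> a aW a_neq0; apply: wt_on_residual cV _ _ _.
  - exact: subvP (diffvSl V <[c]>) a aW.
  - exact: memv_diff_notin aW a_neq0.
  - by move=> v vV v_neq0; apply: c_min; rewrite vV v_neq0.
have := IHk _ W _ dimW wtW.
rewrite -(cardsID (word_support c) S) -/(wt_on S c) -(leq_add2l (wt_on S c)).
rewrite -griesmerS ?card_finField_gt0 //; apply: leq_trans.
exact/leq_griesmer/wtV.
Qed.

End Weights.

Section Support.
Variables (F : finFieldType) (n : nat).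
Implicit Types (a v : 'rV[F]_n) (D : {vspace 'rV[F]_n}).

Lemma code_support_add_line D a :
  code_support (D + <[a]>)%VS = code_support D :|: word_support a.
Proof.
apply/setP => i; rewrite !inE; apply/existsP/orP.
  case=> _ /andP[/memv_addP[u uD [_ /vlineP[m ->] ->]]].
  rewrite !mxE => v_i; have [ui | ui] := eqVneq (u 0 i) 0.
    by right; apply: contraTneq v_i => ->; rewrite ui mulr0 addr0 eqxx.
  by left; apply/existsP; exists u; rewrite uD.
case=> [/existsP[u /andP[uD ui]] | ai].
  by exists u; rewrite ui andbT (subvP (addvSl D <[a]>)).
by exists a; rewrite ai andbT (subvP (addvSr D <[a]>)) ?memv_line.
Qed.

Lemma eff_length_add_line D a :
  eff_length (D + <[a]>)%VS = (eff_length D + wt_on (~: code_support D) a)%N.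
Proof.
rewrite /eff_length code_support_add_line -(cardsID (code_support D)) setUK.
by rewrite setDUl setDv set0U setDE setIC.
Qed.

Lemma eff_length0 : eff_length (0%VS : {vspace 'rV[F]_n}) = 0%N.
Proof.
apply/eqP; rewrite cards_eq0; apply/eqP/setP => i; rewrite !inE.
by apply/existsP => -[v]; rewrite memv0 => /andP[/eqP-> ]; rewrite mxE eqxx.
Qed.

Lemma wt_on_code_support D v : v \in D -> wt_on (code_support D) v = wt v.
Proof.
move=> vD; rewrite /wt_on (setIidPr _) //; apply/subsetP => i; rewrite !inE => vi.
by apply/existsP; exists v; rewrite vD.
Qed.

Lemma griesmer_bound_eff_length D d :
  (forall v, v \in D -> v != 0 -> (d <= wt v)%N) ->
  (griesmer #|F| (\dim D) d <= eff_length D)%N.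
Proof.
move=> wtD; apply: griesmer_bound_on (erefl _) _ => v vD v_neq0.
by rewrite wt_on_code_support ?wtD.
Qed.

End Support.

Section GriesmerChain.
Variables (F : finFieldType) (n k d : nat) (C : {vspace 'rV[F]_n}).
Hypothesis dimC : \dim C = k.
Let k1 := minn (Gamma #|F| n k d) k.-1.

Lemma exists_low_weight_extension D j :
  (D <= C)%VS -> \dim D = j -> eff_length D = griesmer #|F| j d -> (j < k1)%N ->
  exists2 a, a \in C & a \notin D /\
    (wt_on (~: code_support D) a <= ceil_div d (#|F| ^ j))%N.
Proof.
move=> DC dimD effD lt_j_k1; set t := ceil_div d (#|F| ^ j).
have [a /and3P[aC aD wt_a] | no_a] :=
  pickP (fun a => [&& a \in C, a \notin D & wt_on (~: code_support D) a <= t]%N).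
  by exists a.
have := before_Gamma (card_finField_gt0 F) lt_j_k1; rewrite ltnNge => /negP[].
rewrite -effD -{1}[n]card_ord -(cardsC (code_support D)) addKn.
apply: (griesmer_bound_on (V := (C :\: D)%VS)); first by rewrite dimv_diff_sub ?dimC ?dimD.
move=> a aW a_neq0; move: (no_a a).
by rewrite (subvP (diffvSl C D)) // (memv_diff_notin aW) //= ltnNge => ->.
Qed.

Hypothesis wtC : forall v, v \in C -> v != 0 -> (d <= wt v)%N.

Lemma griesmer_subcode_step D j :
  (D <= C)%VS -> \dim D = j -> eff_length D = griesmer #|F| j d -> (j < k1)%N ->
  exists D' : {vspace 'rV[F]_n}, [/\ (D <= D')%VS, (D' <= C)%VS, \dim D' = j.+1
                                   & eff_length D' = griesmer #|F| j.+1 d].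
Proof.
move=> DC dimD effD lt_j_k1.
have [a aC [aD wt_a]] := exists_low_weight_extension DC dimD effD lt_j_k1.
have D'C : (D + <[a]> <= C)%VS by rewrite subv_add DC -memvE.
have dimD' : \dim (D + <[a]>) = j.+1 by rewrite dimv_add_line ?dimD.
have eff_le : (eff_length (D + <[a]>) <= griesmer #|F| j.+1 d)%N.
  by rewrite eff_length_add_line effD griesmerSr leq_add2l.
have eff_ge : (griesmer #|F| j.+1 d <= eff_length (D + <[a]>))%N.
  rewrite -dimD' griesmer_bound_eff_length // => v vD' v_neq0.
  exact/wtC/v_neq0/(subvP D'C).
exists (D + <[a]>)%VS; split; rewrite ?addvSl //.
by apply/eqP; rewrite eqn_leq eff_le eff_ge.
Qed.

Lemma griesmer_subcode_chain j : (j <= k1)%N ->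
  exists Cs : nat -> {vspace 'rV[F]_n},
    (forall i, (i <= j)%N ->
       [/\ (Cs i <= C)%VS, \dim (Cs i) = i & eff_length (Cs i) = griesmer #|F| i d]) /\
    (forall i, (i < j)%N -> (Cs i <= Cs i.+1)%VS).
Proof.
elim: j => [_ | j IHj lt_j_k1].
  exists (fun=> 0%VS); split=> // i; rewrite leqn0 => /eqP->.
  by rewrite sub0v dimv0 eff_length0 griesmer0.
have [Cs [Cs_sub Cs_chain]] := IHj (ltnW lt_j_k1).
have [Csj_C dim_Csj eff_Csj] := Cs_sub j (leqnn j).
have [D' [CsjD' D'C dimD' effD']] := griesmer_subcode_step Csj_C dim_Csj eff_Csj lt_j_k1.
exists (fun i => if i == j.+1 then D' else Cs i); split=> i.
  by rewrite leq_eqVlt; case: eqP => [-> | _ /Cs_sub].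
move=> lt_i_Sj; rewrite (ltn_eqF lt_i_Sj) eqSS.
have [-> | ne_ij] := eqVneq i j; first exact: CsjD'.
by apply: Cs_chain; rewrite ltn_neqAle ne_ij -ltnS.
Qed.

End GriesmerChain.

Theorem proposition2 (F : finFieldType) (n k d : nat)
    (C : {vspace 'rV[F]_n}) :
  is_code C k d ->
  griesmer_optimal #|F| n k d ->
  let k1 := minn (Gamma #|F| n k d) k.-1 in
  exists Cs : nat -> {vspace 'rV[F]_n},
    (forall i, (1 <= i <= k1)%N ->
       [/\ (Cs i <= C)%VS, \dim (Cs i) = i & eff_length (Cs i) = griesmer #|F| i d]) /\
    (forall i, (1 <= i < k1)%N -> (Cs i <= Cs i.+1)%VS).
Proof.
move=> [dimC [_ wtC]] _ k1.
have [Cs [Cs_sub Cs_chain]] := griesmer_subcode_chain dimC wtC (leqnn k1).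
by exists Cs; split=> i /andP[_]; [apply: Cs_sub | apply: Cs_chain].
Qed.
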